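(* Consider natural gradient descent with momentum $\mu\in[0,1)$ on linear regression with label noise in the limit $N\to\infty$, i.e., with preconditioning matrix $\Lambda:=\frac\lambda S C^{-1}$, where $C=\frac1S(A\Sigma A+\mathrm{Tr}[A\Sigma]A+\sigma^2A)$. Let $g:=\frac{1}{1+D}\frac{1}{1+\mu}+\frac{1}{1-\mu}\frac1S$ and $$x:=\frac\lambda4g-\frac12\frac{\sigma^2}{1+D}+\frac14\sqrt{\lambda^2g^2+4\lambda\left(g-\frac{2}{1+D}\frac{1}{1+\mu}\right)\frac{\sigma^2}{1+D}+4\left(\frac{\sigma^2}{1+D}\right)^2}.$$ Then the model fluctuation is $\Sigma=xA^{-1}$, in the sense that $\Sigma=xA^{-1}$ (with the corresponding $C$ and $\Lambda$) solves the stationarity equation $(1-\mu)(\Lambda A\Sigma+\Sigma A\Lambda)-\frac{1+\mu^2}{1-\mu^2}\Lambda A\Sigma A\Lambda+\frac{\mu}{1-\mu^2}(\Lambda A\Lambda A\Sigma+\Sigma A\Lambda A\Lambda)=\Lambda C\Lambda$.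
   Context: Data: $x_i\in\mathbb{R}^D$ i.i.d. $\mathcal N(0,A)$, $A$ symmetric positive definite; $y_i=\mathbf{u}^{\mathrm T}x_i+\epsilon_i$ with label noise of mean $0$ and variance $\sigma^2$; squared loss with Hessian $A$; batch size $S$; learning rate $\lambda>0$. $\Sigma$ denotes the stationary covariance $\mathbb{E}[(\mathbf{w}-\mathbf{u})(\mathbf{w}-\mathbf{u})^{\mathrm T}]$ and $C$ the averaged minibatch noise covariance (equal to the Fisher information in this setting). *)

From HB Require Import structures.
From mathcomp Require Import all_boot all_order all_algebra.
Set Implicit Arguments. Unset Strict Implicit. Unset Printing Implicit Defensive.
Import Order.TTheory GRing.Theory Num.Theory.
Local Open Scope ring_scope.

Definition sym_posdef (R : realFieldType) (n : nat) (A : 'M[R]_n) : Prop :=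
  A^T = A /\ forall v : 'cV[R]_n, v != 0 -> 0 < (v^T *m A *m v) 0 0.

Definition noise_cov (R : realFieldType) (n : nat) (S : nat) (sigma : R)
  (A Sigma : 'M[R]_n) : 'M[R]_n :=
  (S%:R)^-1 *: (A *m Sigma *m A + \tr (A *m Sigma) *: A + sigma ^+ 2 *: A).

Definition ngd_precond (R : realFieldType) (n : nat) (S : nat) (lambda : R)
  (C : 'M[R]_n) : 'M[R]_n :=
  (lambda / S%:R) *: invmx C.

Definition stationary_eq (R : realFieldType) (n : nat) (mu : R)
  (Lambda A Sigma C : 'M[R]_n) : Prop :=
  (1 - mu) *: (Lambda *m A *m Sigma + Sigma *m A *m Lambda)
  - ((1 + mu ^+ 2) / (1 - mu ^+ 2)) *: (Lambda *m A *m Sigma *m A *m Lambda)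
  + (mu / (1 - mu ^+ 2)) *:
      (Lambda *m A *m Lambda *m A *m Sigma + Sigma *m A *m Lambda *m A *m Lambda)
  = Lambda *m C *m Lambda.

Definition g_coef (R : realFieldType) (D S : nat) (mu : R) : R :=
  (1 + D%:R)^-1 * (1 + mu)^-1 + (1 - mu)^-1 * (S%:R)^-1.

Definition x_coef (R : rcfType) (D S : nat) (mu lambda sigma : R) : R :=
  let g := g_coef D S mu in
  let s := sigma ^+ 2 / (1 + D%:R) in
  lambda / 4%:R * g - s / 2%:R
  + Num.sqrt (lambda ^+ 2 * g ^+ 2
              + 4%:R * lambda * (g - 2%:R / (1 + D%:R) / (1 + mu)) * s
              + 4%:R * s ^+ 2) / 4%:R.

From HB Require Import structures.
From mathcomp Require Import all_boot all_order all_algebra.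
From mathcomp Require Import ring lra.

(* With Sigma = x A^-1 every matrix of the stationarity equation is a scalar
   multiple of A or of A^-1: C = M/S A and Lambda = lambda/M A^-1 with
   M = x (1 + D) + sigma^2.  The equation therefore collapses to the scalar
   equation (1 - mu) (2 - lambda/(M (1 + mu))) x = lambda/S which, after clearing
   denominators, is the quadratic 2 x^2 = (lambda g - 2 s) x + lambda s/((1 - mu) S)
   with s = sigma^2/(1 + D); x_coef is its positive root. *)

Set Implicit Arguments.
Unset Strict Implicit.
Unset Printing Implicit Defensive.
Import Order.TTheory GRing.Theory Num.Theory.
Local Open Scope ring_scope.

Lemma sym_posdef_unitmx (R : realFieldType) (n : nat) (A : 'M[R]_n) :
  sym_posdef A -> A \in unitmx.
Proof.
case=> _ A_pos; rewrite unitmxE unitfE; apply/negP => /det0P [v v_neq0 vA0].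
have /A_pos : v^T != 0 by rewrite trmx_eq0.
by rewrite trmxK vA0 mul0mx mxE ltxx.
Qed.

Section QuadraticRoot.

Variable R : rcfType.

Definition quad_root (p q : R) : R := (p + Num.sqrt (p ^+ 2 + 8 * q)) / 4.

Lemma quad_rootE (p q : R) :
  0 <= q -> 2 * quad_root p q ^+ 2 = p * quad_root p q + q.
Proof.
move=> q_ge0; rewrite /quad_root.
have /sqr_sqrtr : 0 <= p ^+ 2 + 8 * q by rewrite addr_ge0 ?sqr_ge0 ?mulr_ge0.
move: (Num.sqrt _) => r r2.
have -> : q = (r ^+ 2 - p ^+ 2) / 8 by rewrite r2; field.
by field.
Qed.

Lemma quad_root_gt0 (p q : R) :
  0 <= q -> 0 < p \/ 0 < q -> 0 < quad_root p q.
Proof.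
move=> q_ge0 pq_gt0; rewrite /quad_root divr_gt0 //.
case: pq_gt0 => [p_gt0 | q_gt0]; first by rewrite ltr_pwDl ?sqrtr_ge0.
have : `|p| < Num.sqrt (p ^+ 2 + 8 * q).
  by rewrite -sqrtr_sqr ltr_sqrt; nra.
have := ler_norm (- p); rewrite normrN; lra.
Qed.

End QuadraticRoot.

Section ScalarMultiplesOfInverse.

Variables (R : realFieldType) (n : nat) (A : 'M[R]_n).
Hypothesis A_unit : A \in unitmx.

Lemma noise_cov_scale_invmx (S : nat) (sigma x : R) :
  noise_cov S sigma A (x *: invmx A) = ((x * (1 + n%:R) + sigma ^+ 2) / S%:R) *: A.
Proof.
rewrite /noise_cov -!scalemxAr mulmxV // -scalemxAl mul1mx mxtraceZ mxtrace1.
by rewrite -!scalerDl scalerA mulrC mulrDr mulr1.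
Qed.

Lemma ngd_precond_scale (S : nat) (lambda c : R) :
  c != 0 -> ngd_precond S lambda (c *: A) = (lambda / S%:R / c) *: invmx A.
Proof.
move=> c_neq0; rewrite /ngd_precond invmxZ ?scalerA //.
by rewrite unitmxZ ?unitfE.
Qed.

Lemma stationary_eq_scale_invmx (mu l x c : R) :
  1 + mu != 0 -> 1 - mu != 0 ->
  (1 - mu) * (2 - l / (1 + mu)) * x = l * c ->
  stationary_eq mu (l *: invmx A) A (x *: invmx A) (c *: A).
Proof.
move=> Dmu_neq0 Bmu_neq0 balance; rewrite /stationary_eq.
rewrite -!scalemxAl -!scalemxAr !scalerA !mulVmx // !mul1mx.
rewrite -!scalemxAl !scalerA !mulVmx // !mul1mx.
apply/matrixP => i j; rewrite !mxE; move: (invmx A i j) => y.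
have -> : l * l * c * y = l * y * (l * c) by ring.
rewrite -balance; field.
by rewrite Dmu_neq0 -[X in X - _](expr1n R 2) subr_sqr mulf_neq0.
Qed.

End ScalarMultiplesOfInverse.

Section XCoef.

Variables (R : rcfType) (D S : nat) (mu lambda sigma : R).
Hypotheses (S_gt0 : (0 < S)%N) (mu_ge0 : 0 <= mu) (mu_lt1 : mu < 1)
  (lambda_gt0 : 0 < lambda).

Let s := sigma ^+ 2 / (1 + D%:R).
Let b := (1 - mu)^-1 * (S%:R)^-1.

Lemma x_coefE :
  x_coef D S mu lambda sigma = quad_root (lambda * g_coef D S mu - 2 * s) (lambda * s * b).
Proof.
rewrite /x_coef /quad_root -/s.
rewrite [X in Num.sqrt X](_ : _ = (lambda * g_coef D S mu - 2 * s) ^+ 2 + 8 * (lambda * s * b)).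
  by field.
by rewrite /g_coef /b; ring.
Qed.

Let D1_gt0 : 0 < 1 + D%:R :> R.
Proof. by rewrite ltr_pwDl ?ler0n. Qed.

Let s_ge0 : 0 <= s.
Proof. by rewrite divr_ge0 ?sqr_ge0 ?ltW. Qed.

Let b_gt0 : 0 < b.
Proof. by rewrite mulr_gt0 ?invr_gt0 ?subr_gt0 ?ltr0n. Qed.

Let q_ge0 : 0 <= lambda * s * b.
Proof. exact: mulr_ge0 (mulr_ge0 (ltW lambda_gt0) s_ge0) (ltW b_gt0). Qed.

Let g_gt0 : 0 < g_coef D S mu.
Proof.
apply: ltr_wpDl b_gt0.
by rewrite mulr_ge0 // invr_ge0 ltW // ltr_pwDl.
Qed.

Lemma x_coef_gt0 : 0 < x_coef D S mu lambda sigma.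
Proof.
rewrite x_coefE; apply: quad_root_gt0 => //.
have [-> | s_neq0] := eqVneq s 0.
  by left; rewrite mulr0 subr0 mulr_gt0.
by right; rewrite mulr_gt0 // mulr_gt0 // lt_def s_neq0 s_ge0.
Qed.

Lemma x_coef_balance :
  let x := x_coef D S mu lambda sigma in
  let M := x * (1 + D%:R) + sigma ^+ 2 in
  (1 - mu) * (2 - lambda / M / (1 + mu)) * x = lambda / S%:R.
Proof.
move=> x M.
have M_gt0 : 0 < M by rewrite ltr_wpDr ?sqr_ge0 // mulr_gt0 ?x_coef_gt0.
have root : 2 * x ^+ 2 - ((lambda * g_coef D S mu - 2 * s) * x + lambda * s * b) = 0.
  by apply/eqP; rewrite subr_eq0 /x x_coefE; apply/eqP/quad_rootE.
apply/eqP; rewrite -subr_eq0; apply/eqP.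
transitivity ((1 - mu) * (1 + D%:R) / M
  * (2 * x ^+ 2 - ((lambda * g_coef D S mu - 2 * s) * x + lambda * s * b))).
  rewrite /M /s /b /g_coef; field.
  by rewrite (gt_eqF M_gt0) (gt_eqF D1_gt0) !gt_eqF ?ltr0n ?subr_gt0 ?ltr_pwDl.
by rewrite root mulr0.
Qed.

End XCoef.

Theorem proposition6 (R : rcfType) (D S : nat) (A : 'M[R]_D)
  (mu lambda sigma : R) :
  (0 < D)%N -> (0 < S)%N -> sym_posdef A ->
  0 <= mu -> mu < 1 -> 0 < lambda ->
  let Sigma := x_coef D S mu lambda sigma *: invmx A in
  let C := noise_cov S sigma A Sigma in
  let Lambda := ngd_precond S lambda C in
  stationary_eq mu Lambda A Sigma C.
Proof.
move=> _ S_gt0 A_posdef mu_ge0 mu_lt1 lambda_gt0.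
have A_unit := sym_posdef_unitmx A_posdef.
have x_gt0 := x_coef_gt0 D sigma S_gt0 mu_ge0 mu_lt1 lambda_gt0.
have balance := x_coef_balance D sigma S_gt0 mu_ge0 mu_lt1 lambda_gt0.
rewrite /= in balance; set x := x_coef D S mu lambda sigma in x_gt0 balance *.
set M := x * (1 + D%:R) + sigma ^+ 2 in balance.
move=> Sigma C Lambda.
have M_gt0 : 0 < M by rewrite ltr_wpDr ?sqr_ge0 // mulr_gt0 // ltr_pwDl.
have Sr_gt0 : 0 < S%:R :> R by rewrite ltr0n.
have eC : C = (M / S%:R) *: A by exact: noise_cov_scale_invmx.
rewrite /Lambda eC ngd_precond_scale ?gt_eqF ?divr_gt0 //.
apply: stationary_eq_scale_invmx => //; rewrite ?gt_eqF ?subr_gt0 ?ltr_pwDl //.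
rewrite (_ : lambda / S%:R / (M / S%:R) = lambda / M); last by field; rewrite !gt_eqF.
by rewrite balance; field; rewrite !gt_eqF.
Qed.
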